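(* Let $G=(V,E)$ be a finite undirected graph, let $k>2$ be an integer, let $C$ be a legitimate configuration (as defined in the context), and let $s\in S(C)$. Then for every node $u\in V$ with $\mathrm{dist}(u,s)\le\lfloor k/2\rfloor$, we have $d_u=\mathrm{dist}(u,s)$.
   Context: $\mathrm{dist}$ is the graph distance in $G$ and $N(u)$ the neighbourhood of $u$. Let $m=\lfloor k/2\rfloor$. A configuration $C$ assigns to each node $u$ the values $d_u\in\{0,\dots,k-1\}$, $err_u\in\{0,1\}$, and for each $i\in\{1,\dots,m-1\}$ a clock value $c_{i,u}\in\mathbb{Z}/4\mathbb{Z}$ and an arrow $b_{i,u}\in\{\uparrow,\downarrow\}$. Let $S(C)=\{u\in V: d_u=0\}$. Predicates on a node $u$: - $\mathrm{well\_defined}(u)$: $err_u=0$, $|d_u-d_v|\le 1$ for all $v\in N(u)$, and if $d_u>0$ then some $v\in N(u)$ has $d_v=d_u-1$. - $\mathrm{leader\_down}(u)$: if $d_u=0$ then $b_{i,u}=\downarrow$ for all $i\in\{1,\dots,m-1\}$. - $\mathrm{bc\_up}(u,i)$: for every $v\in N(u)$ with $d_v=d_u-1$, $(b_{i,u},b_{i,v},c_{i,v})\in\{(\uparrow,\uparrow,c_{i,u}),(\uparrow,\downarrow,c_{i,u}),(\uparrow,\downarrow,c_{i,u}+1),(\downarrow,\downarrow,c_{i,u})\}$. - $\mathrm{bc\_down}(u,i)$: for every $v\in N(u)$ with $d_v=d_u+1$, $(b_{i,u},b_{i,v},c_{i,v})\in\{(\uparrow,\uparrow,c_{i,u}),(\downarrow,\uparrow,c_{i,u}),(\downarrow,\uparrow,c_{i,u}-1),(\downarrow,\downarrow,c_{i,u})\}$.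 - $\mathrm{branch\_coherence}(u)$: either $d_u\ge m$, or ($\mathrm{bc\_up}(u,d_u)$ holds, and $\mathrm{bc\_up}(u,i)$ and $\mathrm{bc\_down}(u,i)$ hold for all $i\in\{d_u+1,\dots,m-1\}$). (For $d_u=0$ the condition $\mathrm{bc\_up}(u,0)$ is vacuous.) Clock arithmetic is in $\mathbb{Z}/4\mathbb{Z}$. A configuration $C$ is legitimate if every node $u$ satisfies $\mathrm{well\_defined}(u)$, $\mathrm{leader\_down}(u)$ and $\mathrm{branch\_coherence}(u)$, and any two distinct nodes of $S(C)$ are at distance at least $k$ in $G$. *)

From mathcomp Require Import all_boot all_algebra.
Set Implicit Arguments. Unset Strict Implicit. Unset Printing Implicit Defensive.
Import GRing.Theory.

Section Graph.
Variable T : finType.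
Variable e : rel T.

Definition simple_graph := symmetric e /\ irreflexive e.

Fixpoint within (n : nat) (u v : T) : bool :=
  match n with
  | 0 => u == v
  | n'.+1 => within n' u v || [exists w, e u w && within n' w v]
  end.

(* graph distance: Some n with n the length of a shortest path,
   None (= infinity) if v is not reachable from u.  A shortest path
   has length < #|T|, so searching lengths 0 .. #|T|-1 suffices. *)
Definition dist (u v : T) : option nat :=
  let i := find (fun n => within n u v) (iota 0 #|T|) in
  if i < #|T| then Some i else None.
End Graph.

(* A configuration for parameter k.  Clocks and arrows are given for all
   indices i : nat; only the indices 1 <= i <= m-1 are ever inspected.
   Arrows: true = up, false = down. *)
Record config (T : finType) (k : nat) := Config {
  dv  : T -> 'I_k;
  err : T -> bool;
  clk : nat -> T -> 'Z_4;
  arr : nat -> T -> bool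
}.

Section Predicates.
Variables (T : finType) (e : rel T) (k : nat) (C : config T k).

Definition mpar := k./2.
Local Notation d u := (nat_of_ord (dv C u)).
Local Notation b i u := (arr C i u).
Local Notation c i u := (clk C i u).

Definition S_set : {set T} := [set u | d u == 0].

Definition well_defined (u : T) : Prop :=
  err C u = false /\
  (forall v, e u v -> d u <= d v + 1 /\ d v <= d u + 1) /\
  (0 < d u -> exists v, e u v /\ d v + 1 = d u).

Definition leader_down (u : T) : Prop :=
  d u = 0 -> forall i, 1 <= i <= mpar - 1 -> b i u = false.

Definition bc_up (u : T) (i : nat) : Prop :=
  forall v, e u v -> d v + 1 = d u ->
    [|| [&& b i u, b i v & c i v == c i u],
        [&& b i u, ~~ b i v & c i v == c i u],
        [&& b i u, ~~ b i v & c i v == (c i u + 1)%R]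
      | [&& ~~ b i u, ~~ b i v & c i v == c i u]].

Definition bc_down (u : T) (i : nat) : Prop :=
  forall v, e u v -> d v = d u + 1 ->
    [|| [&& b i u, b i v & c i v == c i u],
        [&& ~~ b i u, b i v & c i v == c i u],
        [&& ~~ b i u, b i v & c i v == (c i u - 1)%R]
      | [&& ~~ b i u, ~~ b i v & c i v == c i u]].

Definition branch_coherence (u : T) : Prop :=
  mpar <= d u \/
  (bc_up u (d u) /\
   forall i, d u + 1 <= i <= mpar - 1 -> bc_up u i /\ bc_down u i).

Definition legitimate : Prop :=
  (forall u, well_defined u /\ leader_down u /\ branch_coherence u) /\
  (forall s1 s2, s1 \in S_set -> s2 \in S_set -> s1 <> s2 ->
     forall n, dist e s1 s2 = Some n -> k <= n).
End Predicates.

From mathcomp Require Import all_boot.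
From mathcomp Require Import zify.
Set Implicit Arguments. Unset Strict Implicit.

(* The level [d] changes by at most one along an edge, so [d u <= d s + dist u s
   = dist u s].  Conversely, every node [u] with [d u > 0] has a neighbour one
   level lower, so following such neighbours reaches a node [r] of [S] after
   [d u] steps.  If [d u < n = dist u s <= k/2], then [r <> s] and
   [dist s r <= n + d u < 2 (k/2) <= k], against the spacing of [S]. *)

Section Walks.
Variables (T : finType) (e : rel T).

Lemma withinP n u v :
  reflect (exists p, [/\ path e u p, last u p = v & size p <= n])
          (within e n u v).
Proof.
apply: (iffP idP).
  elim: n u => [|n IHn] u /=; first by move/eqP <-; exists [::].
  case/orP => [/IHn [p [pp lp sp]] |
               /existsP [w /andP [uw /IHn [p [pp lp sp]]]]].
    by exists p; split => //; apply: leqW.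
  by exists (w :: p); rewrite /= uw.
case=> p [+ <-]; elim: p u n => [u n _ _ | w p IHp u [|n] //= /andP [uw pp] sp].
  by elim: n => [|n IHn] /=; rewrite ?eqxx ?IHn.
by apply/orP; right; apply/existsP; exists w; rewrite uw IHp.
Qed.

Lemma within_mono m n u v : m <= n -> within e m u v -> within e n u v.
Proof.
move=> mn /withinP [p [pp lp sp]]; apply/withinP.
by exists p; split => //; apply: leq_trans mn.
Qed.

Lemma within_cat m n u w v :
  within e m u w -> within e n w v -> within e (m + n) u v.
Proof.
move=> /withinP [p [pp <- sp]] /withinP [q [pq <- sq]]; apply/withinP.
exists (p ++ q); rewrite cat_path last_cat size_cat pp pq.
by split => //; apply: leq_add.
Qed.

Lemma within_edge u v : e u v -> within e 1 u v.
Proof. by move=> uv; apply/withinP; exists [:: v]; rewrite /= uv. Qed.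

Lemma within_sym : symmetric e -> forall n u v, within e n u v -> within e n v u.
Proof.
move=> sym_e; elim=> [|n IHn] u v; first by move=> /= /eqP ->.
case/orP => [/IHn /(within_mono (leqnSn n)) // | /existsP [w /andP [uw /IHn wv]]].
by rewrite -addn1; apply: within_cat wv (within_edge _); rewrite sym_e.
Qed.

Lemma within_card n u v : within e n u v -> within e #|T|.-1 u v.
Proof.
case/withinP => p [pp lp _]; case/shortenP: pp lp => q pq uq _ lq.
apply/withinP; exists q; split => //.
by have := max_card (mem (u :: q)); rewrite (card_uniqP uq) /=; lia.
Qed.

Lemma dist_Some u v n :
  dist e u v = Some n -> within e n u v /\ forall j, j < n -> ~~ within e j u v.
Proof.
rewrite /dist; set p := fun n => within e n u v.
case: ifP => // lt_find [<-]; split.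
  have := @nth_find _ 0 p (iota 0 #|T|).
  by rewrite has_find size_iota nth_iota // add0n; apply.
move=> j lt_j; have := @before_find _ 0 p (iota 0 #|T|) j lt_j.
by rewrite nth_iota ?add0n /p => [->|]; last apply: ltn_trans lt_find.
Qed.

Lemma within_dist n u v : within e n u v -> exists2 m, dist e u v = Some m & m <= n.
Proof.
move=> uv; set N := minn n #|T|.-1.
have T_gt0 : 0 < #|T| by apply/card_gt0P; exists u.
have uvN : within e N u v.
  by rewrite /N; case: (leqP n #|T|.-1) => _; [exact: uv | exact: within_card uv].
set p := fun n => within e n u v.
have find_le : find p (iota 0 #|T|) <= N.
  rewrite leqNgt; apply/negP => lt_N.
  have := @before_find _ 0 p (iota 0 #|T|) N lt_N.
  by rewrite nth_iota ?add0n /p ?uvN //; lia.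
by exists (find p (iota 0 #|T|)); [rewrite /dist -/p ifT //|]; lia.
Qed.

End Walks.

Section Levels.
Variables (T : finType) (e : rel T) (k : nat) (C : config T k).
Hypothesis wdC : forall u, well_defined e C u.
Local Notation d u := (nat_of_ord (dv C u)).

Lemma dv_le_within n u v : within e n u v -> d u <= d v + n.
Proof.
elim: n u => [|n IHn] u /=; first by move/eqP ->; rewrite addn0.
case/orP => [/IHn | /existsP [w /andP [uw /IHn]]]; first lia.
by have [_ [/(_ w uw) + _]] := wdC u; lia.
Qed.

Lemma exists_root_within n u : d u = n -> exists2 r, r \in S_set C & within e n u r.
Proof.
elim: n u => [|n IHn] u du; first by exists u; rewrite /S_set ?inE ?du /=.
have [v [uv dv_u]] : exists v, e u v /\ d v + 1 = d u by apply: (wdC u).2.2; lia.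
have /IHn [r Sr vr] : d v = n by lia.
by exists r; rewrite // -add1n; apply: within_cat (within_edge uv) vr.
Qed.

End Levels.

Theorem lemma2 (T : finType) (e : rel T) (k : nat) (C : config T k) :
  simple_graph e -> 2 < k -> legitimate e C ->
  forall s, s \in S_set C ->
  forall u n, dist e u s = Some n -> n <= k./2 ->
  nat_of_ord (dv C u) = n.
Proof.
move=> [sym_e _] _ [hC S_far] s Ss u n /dist_Some [us us_min] n_le.
have wdC x : well_defined e C x by case: (hC x).
have ds : nat_of_ord (dv C s) = 0 by move: Ss; rewrite inE => /eqP.
have du_le := dv_le_within wdC us; rewrite ds in du_le.
apply/eqP; rewrite eqn_leq du_le leqNgt; apply/negP => du_lt.
have [r Sr ur] := exists_root_within wdC (erefl (nat_of_ord (dv C u))).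
have r_neq_s : r <> s by move=> rs; move: (us_min _ du_lt); rewrite -rs ur.
have [m sr m_le] := within_dist (within_cat (within_sym sym_e us) ur).
have := S_far s r Ss Sr (nesym r_neq_s) m sr.
have := odd_double_half k; lia.
Qed.
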